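(* Let $k\ge 1$ and $n$ be integers with $2k\le n\le 2k+2$ (equivalently, $\mathrm{SG}(n,k)$ is $t$-chromatic with $t=n-2k+2\le 4$). Then $\mathrm{SG}(n,k)$ admits an orientation in which every shortest odd cycle of $\mathrm{SG}(n,k)$ is alternating (vacuously if it has no odd cycle).
   Context: The Kneser graph $\mathrm{KG}(n,k)$ ($n\ge 2k$) has as vertices all $k$-element subsets of $[n]=\{1,\dots,n\}$, two being adjacent iff disjoint. The Schrijver graph $\mathrm{SG}(n,k)$ is the induced subgraph of $\mathrm{KG}(n,k)$ on the stable $k$-subsets, i.e., those $A$ containing no pair $\{i,i+1\}$ for $i\in[n-1]$ and not containing both $1$ and $n$; its chromatic number is $n-2k+2$. An orientation assigns each edge exactly one direction. In an oriented graph, a subgraph that is a cycle is called alternating if at most one of its vertices has both positive in-degree and positive out-degree within that cycle. *)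

(* Ground set [n] is encoded as 'I_n, element m+1 of [n] <-> ordinal m. *)
From mathcomp Require Import all_boot.
Set Implicit Arguments. Unset Strict Implicit. Unset Printing Implicit Defensive.

Definition stableb (n : nat) (A : {set 'I_n}) : bool :=
  [forall i : 'I_n, forall j : 'I_n,
     ((i \in A) && (j \in A)) ==>
     ~~ ((val j == (val i).+1) || ((val i == 0) && (val j == n.-1)))].

Definition SGvert (n k : nat) (A : {set 'I_n}) : bool :=
  (#|A| == k) && stableb A.

Definition SGadj (n k : nat) (A B : {set 'I_n}) : bool :=
  [&& SGvert k A, SGvert k B & [disjoint A & B]].

Definition is_orientation (n k : nat) (o : rel {set 'I_n}) : Prop :=
  (forall A B, o A B -> SGadj k A B) /\
  (forall A B, SGadj k A B -> o A B (+) o B A).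

Definition SGcycle (n k : nat) (c : seq {set 'I_n}) : bool :=
  [&& 3 <= size c, uniq c & cycle (SGadj k) c].

Definition odd_cycle (n k : nat) (c : seq {set 'I_n}) : bool :=
  SGcycle k c && odd (size c).

Definition shortest_odd_cycle (n k : nat) (c : seq {set 'I_n}) : Prop :=
  odd_cycle k c /\ forall c' : seq {set 'I_n}, odd_cycle k c' -> size c <= size c'.

Definition mixed_at (n : nat) (o : rel {set 'I_n}) (c : seq {set 'I_n})
    (i : nat) : bool :=
  let L := size c in
  let x := nth set0 c i in
  let p := nth set0 c ((i + L).-1 %% L) in
  let q := nth set0 c (i.+1 %% L) in
  (o p x && o x q) || (o q x && o x p).

Definition alternating (n : nat) (o : rel {set 'I_n}) (c : seq {set 'I_n}) : bool :=
  count (mixed_at o c) (iota 0 (size c)) <= 1.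

From mathcomp Require Import all_boot zify.
Set Implicit Arguments. Unset Strict Implicit. Unset Printing Implicit Defensive.

(* Orient every edge of SG(n,k) away from the end containing 1 and towards the end
   containing 2 (no vertex contains both), arbitrarily otherwise.  For an odd cycle
   A_0 ... A_(L-1) and x in [n], let f(x) be the number of cycle edges avoiding x.  The
   cycle edges covering x are those where membership of x changes, an even number, so
   f(x) is odd, and double counting gives sum_x f(x) = (n - 2k) L.  A vertex with an
   in-arc and an out-arc in the cycle contains neither 1 nor 2, so it has an out-arc
   avoiding 1 and an in-arc avoiding 2; hence two such vertices force f(1), f(2) >= 3
   and (n - 2k) L >= n + 4.  The cyclic shifts of an explicit stable set give an odd
   cycle violating this bound, so a shortest odd cycle does too. *)

Lemma prev_modn i L : i < L -> (i + L).-1 %% L = if i is j.+1 then j else L.-1.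
Proof.
case: i => [|i] lt_iL; last by rewrite addSn /= modnDr modn_small // ltnW.
by rewrite add0n modn_small //; case: L lt_iL.
Qed.

Lemma next_modn i L : i < L -> i.+1 %% L = if i.+1 == L then 0 else i.+1.
Proof. by move=> lt_iL; case: eqP => [->|ne_iL]; [rewrite modnn | rewrite modn_small //; lia]. Qed.

Lemma next_prev_modn i L : i < L -> ((i + L).-1 %% L).+1 %% L = i.
Proof.
move=> lt_iL; rewrite (prev_modn lt_iL); case: i lt_iL => [|i] lt_iL.
  by case: L lt_iL => // L _; rewrite modnn.
by rewrite modn_small.
Qed.

Lemma sum_prev_modn (F : nat -> nat) L : 0 < L ->
  \sum_(i < L) F ((i + L).-1 %% L) = \sum_(i < L) F i.
Proof.
move=> L_gt0; pose prev (i : 'I_L) : 'I_L := Ordinal (ltn_pmod (i + L).-1 L_gt0).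
have prev_inj : injective prev.
  move=> [i lt_iL] [j lt_jL] /(congr1 val) /=; rewrite !prev_modn // => eq_ij.
  by apply/val_inj => /=; case: i lt_iL eq_ij => [|i]; case: j lt_jL => [|j]; lia.
by rewrite [RHS](reindex_inj prev_inj).
Qed.

Lemma cycle_nthP (T : Type) (x0 : T) (e : rel T) (s : seq T) : 0 < size s ->
  cycle e s <-> (forall i, i < size s -> e (nth x0 s i) (nth x0 s (i.+1 %% size s))).
Proof.
case: s => [//|y s] _; rewrite (cycle_path x0) /=.
have nth_size : nth x0 (y :: s) (size s) = last y s.
  by rewrite -[size s]/((size (y :: s)).-1) nth_last.
split.
- move/andP=> [e_last /(pathP x0) e_path] i; rewrite ltnS leq_eqVlt.
  case/orP=> [/eqP->|lt_is]; first by rewrite modnn nth_size.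
  by rewrite modn_small ?ltnS //; exact: (e_path i lt_is).
- move=> e_nth; apply/andP; split.
    by have := e_nth (size s) (leqnn _); rewrite modnn nth_size.
  apply/(pathP x0) => i lt_is.
  by have := e_nth i (ltnW lt_is); rewrite modn_small ?ltnS.
Qed.

Lemma count_iota0 (P : pred nat) L : count P (iota 0 L) = \sum_(i < L) P i.
Proof.
rewrite -sum1_count big_mkcond /= -(big_mkord xpredT (fun i => (P i : nat))).
by rewrite /index_iota subn0; apply: eq_bigr => i _; case: (P i).
Qed.

Lemma odd_sum_changes (b : nat -> bool) m :
  odd (\sum_(i < m) (b i != b i.+1)) = (b 0 != b m).
Proof.
elim: m => [|m IHm]; first by rewrite big_ord0; case: (b 0).
by rewrite big_ord_recr /= oddD IHm oddb; case: (b 0); case: (b m); case: (b m.+1).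
Qed.

Lemma even_sum_cyclic_changes (b : nat -> bool) L : 0 < L ->
  ~~ odd (\sum_(i < L) (b i != b (i.+1 %% L))).
Proof.
case: L => [//|L] _; rewrite big_ord_recr /= modnn.
under eq_bigr => i _ do rewrite (@modn_small i.+1) ?ltnS //.
by rewrite oddD odd_sum_changes; case: (b 0); case: (b L).
Qed.

(* Each cyclic step is either a change or a pair of falses, so these two counts add up to L. *)
Lemma odd_sum_cyclic_both_false (b : nat -> bool) L : 0 < L ->
  (forall i, i < L -> ~~ (b i && b (i.+1 %% L))) ->
  odd (\sum_(i < L) (~~ b i && ~~ b (i.+1 %% L))) = odd L.
Proof.
move=> L_gt0 no_tt.
have split_L :
    \sum_(i < L) (~~ b i && ~~ b (i.+1 %% L)) + \sum_(i < L) (b i != b (i.+1 %% L)) = L.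
  rewrite -big_split /= -[RHS]card_ord -sum1_card; apply: eq_bigr => i _.
  by have := no_tt i (ltn_ord i); case: (b i); case: (b (i.+1 %% L)).
by rewrite -[in RHS]split_L oddD (negbTE (even_sum_cyclic_changes b L_gt0)) addbF.
Qed.

Lemma sum_uncovered_disjoint_pairs (T : finType) k L (A : nat -> {set T}) :
  (forall i, i < L -> #|A i| = k) ->
  (forall i, i < L -> [disjoint A i & A (i.+1 %% L)]) ->
  \sum_(x : T) \sum_(i < L) ((x \notin A i) && (x \notin A (i.+1 %% L)))
    = (#|T| - 2 * k) * L.
Proof.
move=> cardA disjA; rewrite exchange_big /=.
rewrite -[in RHS](card_ord L) mulnC -sum_nat_const; apply: eq_bigr => i _.
have lt_iL := ltn_ord i; have lt_jL : i.+1 %% L < L by rewrite ltn_pmod // (leq_ltn_trans _ lt_iL).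
have -> : \sum_(x : T) ((x \notin A i) && (x \notin A (i.+1 %% L)))
          = #|~: (A i :|: A (i.+1 %% L))|.
  rewrite -sum1_card [RHS]big_mkcond /=; apply: eq_bigr => x _.
  by rewrite !inE; case: (x \in A i); case: (x \in A _).
rewrite cardsCs setCK cardsU (disjoint_setI0 (disjA i lt_iL)) cards0 subn0.
by rewrite cardA // cardA // addnn -mul2n.
Qed.

Lemma card_add4_le_sum_odd (T : finType) (f : T -> nat) (a b : T) : a != b ->
  (forall x, odd (f x)) -> 1 < f a -> 1 < f b -> #|T| + 4 <= \sum_x f x.
Proof.
move=> neq_ab odd_f f_a f_b.
have -> : \sum_x f x = #|T| + \sum_x (f x).-1.
  rewrite -sum1_card -big_split /=; apply: eq_bigr => x _.
  by rewrite add1n prednK //; case: (f x) (odd_f x).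
rewrite leq_add2l (bigD1 a) // (bigD1 b) 1?eq_sym //=.
have ge3 x : 1 < f x -> 3 <= f x by case: (f x) (odd_f x) => [|[|[|]]].
have := ge3 a f_a; have := ge3 b f_b; lia.
Qed.

(* Vertex i needs M i tokens and sends u i j to its neighbour j; the cyclic edge
   {i, i+1} carries w i tokens in total. *)
Lemma cyclic_charging L (M w : nat -> nat) (u : nat -> nat -> nat) : 0 < L ->
  (forall i, i < L -> M i <= u i (i.+1 %% L) + u i ((i + L).-1 %% L)) ->
  (forall i, i < L -> u i (i.+1 %% L) + u (i.+1 %% L) i = w i) ->
  \sum_(i < L) M i <= \sum_(i < L) w i.
Proof.
move=> L_gt0 le_M sum_u.
rewrite -(eq_bigr _ (fun (i : 'I_L) _ => sum_u i (ltn_ord i))) big_split /=.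
rewrite -(sum_prev_modn (fun j => u (j.+1 %% L) j) L_gt0) -big_split /=.
apply: leq_sum => i _; rewrite next_prev_modn //; exact: le_M.
Qed.

Section Orientation.
Variables (m k : nat).
Hypothesis k_gt0 : 0 < k.
Local Notation T := {set 'I_m.+2}.

Definition elt1 : 'I_m.+2 := ord0.
Definition elt2 : 'I_m.+2 := inord 1.

Lemma elt2_val : val elt2 = 1.
Proof. by rewrite /elt2 /= inordK. Qed.

Lemma elt1_neq_elt2 : elt1 != elt2.
Proof. by apply/eqP => /(congr1 val); rewrite elt2_val. Qed.

Definition SGrule (A B : T) : bool :=
  if elt1 \in A then true else if elt1 \in B then false else
  if elt2 \in B then true else if elt2 \in A then false else
  enum_rank A < enum_rank B.

Definition SGori : rel T := fun A B => SGadj k A B && SGrule A B.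

Lemma SGadjC (A B : T) : SGadj k A B = SGadj k B A.
Proof. by rewrite /SGadj disjoint_sym; case: (SGvert k A); case: (SGvert k B). Qed.

Lemma SGadj_disjoint (A B : T) : SGadj k A B -> [disjoint A & B].
Proof. by case/and3P. Qed.

Lemma SGadj_neq (A B : T) : SGadj k A B -> A != B.
Proof.
case/and3P=> /andP[/eqP cardA _] _; apply: contraTneq => <-.
have [x xA] : exists x, x \in A by apply/card_gt0P; rewrite cardA.
by apply/negP => /pred0P /(_ x); rewrite /= xA.
Qed.

Lemma SGvert_elt1_elt2 (A : T) : SGvert k A -> elt1 \in A -> elt2 \notin A.
Proof.
case/andP=> _ /forallP stableA A1; apply/negP => A2.
by have /forallP/(_ elt2) := stableA elt1; rewrite A1 A2 elt2_val.
Qed.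

Lemma SGrule_xor (A B : T) : [disjoint A & B] -> A != B -> SGrule A B (+) SGrule B A.
Proof.
move=> dAB neAB; rewrite /SGrule.
case A1: (elt1 \in A); first by rewrite (disjointFr dAB A1).
case B1: (elt1 \in B) => //.
case B2: (elt2 \in B); first by rewrite (disjointFl dAB B2).
case A2: (elt2 \in A) => //.
have : enum_rank A != enum_rank B by apply: contra neAB => /eqP /enum_rank_inj ->.
by rewrite neq_ltn => /orP[] lt_AB; rewrite lt_AB ltnNge ltnW.
Qed.

Lemma SGori_orientation : is_orientation k SGori.
Proof.
split=> [A B /andP[] //|A B adjAB].
rewrite /SGori adjAB -SGadjC adjAB.
exact: SGrule_xor (SGadj_disjoint adjAB) (SGadj_neq adjAB).
Qed.

Lemma SGori_elt1 (X Y : T) : SGori X Y -> elt1 \notin Y.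
Proof.
case/andP=> /SGadj_disjoint dXY; rewrite /SGrule.
case X1: (elt1 \in X); first by rewrite (disjointFr dXY X1).
by case: (elt1 \in Y).
Qed.

Lemma SGori_elt2 (X Y : T) : SGori X Y -> elt2 \notin X.
Proof.
case/andP=> adjXY; rewrite /SGrule.
case X1: (elt1 \in X).
  by move: adjXY => /and3P[vX _ _] _; exact: SGvert_elt1_elt2 vX X1.
case: (elt1 \in Y) => //.
case Y2: (elt2 \in Y); first by rewrite (disjointFl (SGadj_disjoint adjXY) Y2).
by case: (elt2 \in X).
Qed.

Definition arc_avoiding (x : 'I_m.+2) (X Y : T) : bool :=
  [&& SGori X Y, x \notin X & x \notin Y].

Lemma arc_avoiding_edge x (X Y : T) : SGadj k X Y ->
  arc_avoiding x X Y + arc_avoiding x Y X = (x \notin X) && (x \notin Y).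
Proof.
move=> adjXY; have [_ /(_ X Y adjXY)] := SGori_orientation.
rewrite /arc_avoiding; case: (SGori X Y); case: (SGori Y X) => //= _.
  by rewrite addn0.
by rewrite add0n andbC.
Qed.

(* A vertex with both an in-arc and an out-arc does not contain 1, so its out-arc avoids 1. *)
Lemma mixed_le_out_avoiding1 (p x q : T) :
  (SGori p x && SGori x q) || (SGori q x && SGori x p)
    <= arc_avoiding elt1 x q + arc_avoiding elt1 x p.
Proof.
rewrite /arc_avoiding; case/boolP: (SGori p x && SGori x q) => [/andP[px xq]|_] /=.
  by rewrite xq (SGori_elt1 px) (SGori_elt1 xq).
case/boolP: (SGori q x && SGori x p) => [/andP[qx xp]|_] //=.
by rewrite xp (SGori_elt1 qx) (SGori_elt1 xp) addn1.
Qed.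

Lemma mixed_le_in_avoiding2 (p x q : T) :
  (SGori p x && SGori x q) || (SGori q x && SGori x p)
    <= arc_avoiding elt2 q x + arc_avoiding elt2 p x.
Proof.
rewrite /arc_avoiding; case/boolP: (SGori p x && SGori x q) => [/andP[px xq]|_] /=.
  by rewrite px (SGori_elt2 px) (SGori_elt2 xq) addn1.
case/boolP: (SGori q x && SGori x p) => [/andP[qx xp]|_] //=.
by rewrite qx (SGori_elt2 qx) (SGori_elt2 xp).
Qed.

End Orientation.

Section OddCycle.
Variables (m k : nat) (c : seq {set 'I_m.+2}).
Hypotheses (k_gt0 : 0 < k) (c_odd : odd_cycle k c).
Local Notation L := (size c).
Local Notation A i := (nth set0 c i).

Definition uncovered (x : 'I_m.+2) : nat :=
  \sum_(i < L) ((x \notin A i) && (x \notin A (i.+1 %% L))).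

Let L_gt0 : 0 < L.
Proof. by case/andP: c_odd => /and3P[/ltnW/ltnW]. Qed.

Let adj_next i : i < L -> SGadj k (A i) (A (i.+1 %% L)).
Proof. by case/andP: c_odd => /and3P[_ _ /(@cycle_nthP _ set0 _ _ L_gt0) /(_ i)]. Qed.

Lemma odd_uncovered x : odd (uncovered x).
Proof.
rewrite /uncovered (@odd_sum_cyclic_both_false (fun i => x \in A i) _ L_gt0).
  by case/andP: c_odd.
move=> i lt_iL; apply/negP => /andP[xAi xAj].
by rewrite (disjointFr (SGadj_disjoint (adj_next lt_iL)) xAi) in xAj.
Qed.

Lemma sum_uncovered : \sum_x uncovered x = (m.+2 - 2 * k) * L.
Proof.
rewrite /uncovered (@sum_uncovered_disjoint_pairs _ k) ?card_ord // => i lt_iL.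
  by have /and3P[/andP[/eqP]] := adj_next lt_iL.
exact: SGadj_disjoint (adj_next lt_iL).
Qed.

Lemma count_mixed_le_uncovered1 :
  count (mixed_at (SGori k) c) (iota 0 L) <= uncovered (elt1 m).
Proof.
rewrite count_iota0 /uncovered.
apply: (@cyclic_charging L (mixed_at (SGori k) c)
          (fun i => (elt1 m \notin A i) && (elt1 m \notin A (i.+1 %% L)))
          (fun i j => arc_avoiding k (elt1 m) (A i) (A j))) => // i lt_iL.
  by rewrite /mixed_at; apply: mixed_le_out_avoiding1.
exact: arc_avoiding_edge (adj_next lt_iL).
Qed.

Lemma count_mixed_le_uncovered2 :
  count (mixed_at (SGori k) c) (iota 0 L) <= uncovered (elt2 m).
Proof.
rewrite count_iota0 /uncovered.
apply: (@cyclic_charging L (mixed_at (SGori k) c)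
          (fun i => (elt2 m \notin A i) && (elt2 m \notin A (i.+1 %% L)))
          (fun i j => arc_avoiding k (elt2 m) (A j) (A i))) => // i lt_iL.
  by rewrite /mixed_at; apply: mixed_le_in_avoiding2.
by rewrite addnC; exact: arc_avoiding_edge (adj_next lt_iL).
Qed.

Lemma alternating_of_small_odd_cycle :
  (m.+2 - 2 * k) * L < m.+2 + 4 -> alternating (SGori k) c.
Proof.
move=> small; rewrite /alternating leqNgt; apply: contraTN small => two_mixed.
rewrite -sum_uncovered -leqNgt -[X in X + 4](card_ord m.+2).
apply: card_add4_le_sum_odd (elt1_neq_elt2 m) odd_uncovered _ _.
  exact: leq_trans two_mixed count_mixed_le_uncovered1.
exact: leq_trans two_mixed count_mixed_le_uncovered2.
Qed.

End OddCycle.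

Section ShiftCycle.
Variables (m k p : nat).
Hypothesis k_gt0 : 0 < k.
Hypothesis mkp : (m.+2 = 2 * k + 1 /\ p = k) \/
                 (m.+2 = 2 * k + 2 /\ (k = 2 * p \/ k + 1 = 2 * p)).
Local Notation N := m.+2.

(* The stable k-set {0, 2, ..., 2p-2, 2p+1, 2p+3, ...}: its cyclic shifts by 0, 1, ..., 2p
   form an odd cycle of length 2p+1 in SG(n,k). *)
Definition base_pos i := if i < p then 2 * i else (2 * i).+1.
Definition shift_pos j a := if a + j < N then a + j else a + j - N.

Lemma base_posE i : (i < p /\ base_pos i = 2 * i) \/ (p <= i /\ base_pos i = 2 * i + 1).
Proof. by rewrite /base_pos; case: ltnP => H; [left | right]; split => //; lia. Qed.

Lemma shift_posE j a :
  (a + j < N /\ shift_pos j a = a + j) \/ (N <= a + j /\ shift_pos j a = a + j - N).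
Proof. by rewrite /shift_pos; case: ltnP => H; [left | right]. Qed.

Lemma shift_base_pos_lt j (i : 'I_k) : j <= 2 * p -> shift_pos j (base_pos i) < N.
Proof.
move=> le_j; have := ltn_ord i; have := base_posE i; have := shift_posE j (base_pos i); lia.
Qed.

Definition shifted j : {set 'I_N} := [set inord (shift_pos j (base_pos i)) | i : 'I_k].

Lemma mem_shifted j (x : 'I_N) : j <= 2 * p ->
  (x \in shifted j) <-> exists i : 'I_k, val x = shift_pos j (base_pos i).
Proof.
move=> le_j; split=> [/imsetP[i _ ->]|[i x_i]].
  by exists i; rewrite /= inordK // shift_base_pos_lt.
by apply/imsetP; exists i => //; apply/val_inj; rewrite /= inordK // shift_base_pos_lt.
Qed.

Lemma card_shifted j : j <= 2 * p -> #|shifted j| = k.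
Proof.
move=> le_j; rewrite card_imset ?card_ord // => i1 i2 /(congr1 val).
rewrite /= !inordK ?shift_base_pos_lt // => eq12; apply/val_inj => /=.
have := ltn_ord i1; have := base_posE i1; have := ltn_ord i2; have := base_posE i2.
have := shift_posE j (base_pos i1); have := shift_posE j (base_pos i2); lia.
Qed.

Lemma stable_shifted j : j <= 2 * p -> stableb (shifted j).
Proof.
move=> le_j; apply/forallP => x; apply/forallP => y; apply/implyP.
case/andP=> /(mem_shifted _ le_j)[i1 x_i1] /(mem_shifted _ le_j)[i2 y_i2].
apply/negP => /orP[/eqP | /andP[/eqP x0 /eqP yN]];
have := ltn_ord i1; have := base_posE i1; have := ltn_ord i2; have := base_posE i2;
have := shift_posE j (base_pos i1); have := shift_posE j (base_pos i2); lia.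
Qed.

Lemma SGvert_shifted j : j <= 2 * p -> SGvert k (shifted j).
Proof. by move=> le_j; rewrite /SGvert card_shifted // eqxx stable_shifted. Qed.

Lemma disjoint_shifted j1 j2 : j1 <= 2 * p -> j2 <= 2 * p ->
  j2 = j1.+1 \/ (j1 = 2 * p /\ j2 = 0) -> [disjoint shifted j1 & shifted j2].
Proof.
move=> le_j1 le_j2 j12; rewrite disjoint_subset; apply/subsetP => x.
move=> /(mem_shifted _ le_j1)[i1 x_i1]; rewrite inE; apply/negP.
move=> /(mem_shifted _ le_j2)[i2 x_i2].
have := ltn_ord i1; have := base_posE i1; have := ltn_ord i2; have := base_posE i2.
have := shift_posE j1 (base_pos i1); have := shift_posE j2 (base_pos i2); lia.
Qed.

(* The first and the p-th elements of shifted j2 cannot both lie in shifted j1. *)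
Lemma shifted_neq j1 j2 : j1 < j2 -> j2 <= 2 * p -> shifted j1 != shifted j2.
Proof.
move=> lt_j12 le_j2; have le_j1 : j1 <= 2 * p by lia.
have lt_p1k : p.-1 < k by lia.
pose i0 := Ordinal k_gt0; pose ip := Ordinal lt_p1k.
apply/eqP => eq12.
have /(mem_shifted _ le_j1)[i1 x_i1] : inord (shift_pos j2 (base_pos i0)) \in shifted j1.
  by rewrite eq12; apply/imsetP; exists i0.
have /(mem_shifted _ le_j1)[i2 x_i2] : inord (shift_pos j2 (base_pos ip)) \in shifted j1.
  by rewrite eq12; apply/imsetP; exists ip.
have := shift_base_pos_lt i0 le_j2; have := shift_base_pos_lt ip le_j2.
move: x_i1 x_i2; rewrite /= => x_i1 x_i2 lt_p lt_0; rewrite !inordK // in x_i1 x_i2.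
have := ltn_ord i1; have := base_posE i1; have := ltn_ord i2; have := base_posE i2.
have := base_posE i0; have := base_posE ip.
have := shift_posE j1 (base_pos i1); have := shift_posE j1 (base_pos i2).
have := shift_posE j2 (base_pos i0); have := shift_posE j2 (base_pos ip); rewrite /=; lia.
Qed.

Definition shift_cycle := mkseq shifted (2 * p).+1.

Lemma odd_cycle_shift_cycle : odd_cycle k shift_cycle.
Proof.
rewrite /odd_cycle /SGcycle /shift_cycle size_mkseq.
apply/andP; split; last by rewrite /= oddM.
apply/and3P; split; first by lia.
- rewrite /mkseq map_inj_in_uniq ?iota_uniq // => a b; rewrite !mem_iota !add0n => lt_a lt_b eq_ab.
  case: (ltngtP a b) => // [lt_ab | lt_ba]; first by have := shifted_neq lt_ab; rewrite eq_ab eqxx; lia.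
  by have := shifted_neq lt_ba; rewrite eq_ab eqxx; lia.
- apply/(cycle_nthP set0); first by rewrite size_mkseq.
  rewrite size_mkseq => i lt_i; rewrite !nth_mkseq ?ltn_pmod // (next_modn lt_i).
  by case: eqP => [end_i|ne_i]; rewrite /SGadj !SGvert_shifted ?disjoint_shifted //=; lia.
Qed.

End ShiftCycle.

Lemma small_odd_cycle_exists m k : 0 < k -> 2 * k < m.+2 <= 2 * k + 2 ->
  exists c : seq {set 'I_m.+2}, odd_cycle k c /\ (m.+2 - 2 * k) * size c < m.+2 + 4.
Proof.
move=> k_gt0 /andP[lt_2k_n le_n].
pose p := if m.+2 == 2 * k + 1 then k else k.+1./2.
have mkp : (m.+2 = 2 * k + 1 /\ p = k) \/
           (m.+2 = 2 * k + 2 /\ (k = 2 * p \/ k + 1 = 2 * p)).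
  by rewrite /p; case: eqP => n_eq; [left | right]; lia.
exists (shift_cycle m k p); split; first exact: odd_cycle_shift_cycle.
by rewrite size_mkseq; lia.
Qed.

Theorem mainTheorem15 (n k : nat) :
  1 <= k -> 2 * k <= n -> n <= 2 * k + 2 ->
  exists o : rel {set 'I_n},
    is_orientation k o /\
    forall c : seq {set 'I_n}, shortest_odd_cycle k c -> alternating o c.
Proof.
move=> k_gt0 le_2k_n le_n_2k2.
case: n le_2k_n le_n_2k2 => [|[|m]] le_2k_n le_n_2k2; try lia.
exists (SGori k); split; first exact: SGori_orientation.
move=> c [c_odd c_min]; apply: alternating_of_small_odd_cycle => //.
have [n_eq|n_gt] := eqVneq m.+2 (2 * k); first by rewrite [X in X - _]n_eq subnn.
have n_range : 2 * k < m.+2 <= 2 * k + 2 by lia.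
have [c' [c'_odd c'_small]] := small_odd_cycle_exists k_gt0 n_range.
apply: leq_ltn_trans c'_small; exact: leq_mul (leqnn _) (c_min c' c'_odd).
Qed.
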